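(* The functor $G:\mathbf{cMet}_1\to\mathrm{ER}(\mathbf U)$, $G(X,d)=(X,d)$, $G(f)=[(x,y)\mapsto d(f(x),y)]$, is full and faithful. In particular, for complete metric spaces $(X,d_X),(Y,d_Y)$ of diameter at most 1 and every functional relation $F:(X,d_X)\to(Y,d_Y)$ in $\mathrm{ER}(\mathbf U)$ there is a unique uniformly continuous $f:X\to Y$ with $[F]=G(f)$.
   Context: $\mathbf{cMet}_1$: complete metric spaces with all distances $\le 1$ and uniformly continuous maps. For functions $\alpha,\beta:Z\to[0,1]$ write $\alpha\sqsubseteq\beta$ if for every $\varepsilon>0$ there exists $\delta>0$ such that for all $z\in Z$, $\alpha(z)\le\delta$ implies $\beta(z)\le\varepsilon$. The category $\mathrm{ER}(\mathbf U)$: objects are pairs $(X,R)$ with $X$ a set and $R:X\times X\to[0,1]$ such that $R(x,x)=0$ for all $x$, $R(x,y)\sqsubseteq R(y,x)$ as functions of $(x,y)$, and $\max(R(x,y),R(y,z))\sqsubseteq R(x,z)$ as functions of $(x,y,z)$. A functional relation $(X,R)\to(Y,S)$ is a function $F:X\times Y\to[0,1]$ with $\max(F(x,y),R(x,x'),S(y,y'))\sqsubseteq F(x',y')$ as functions of $(x,x',y,y')$, $\max(F(x,y),F(x,y'))\sqsubseteq S(y,y')$ as functions of $(x,y,y')$, and $\inf_{y\in Y}F(x,y)=0$ for all $x$. Morphisms are equivalence classes $[F]$ of functional relations, with $F\sim F'$ iff $F\sqsubseteq F'$ as functions on $X\times Y$; identity $[R]$; composite of $[F]$ and $[H]$ is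 $[(x,z)\mapsto\inf_y\max(F(x,y),H(y,z))]$. *)

From Stdlib Require Import Reals.
Open Scope R_scope.

Definition sqsub {Z : Type} (alpha beta : Z -> R) : Prop :=
  forall eps, 0 < eps -> exists delta, 0 < delta /\
    forall z, alpha z <= delta -> beta z <= eps.

Definition is_metric1 (X : Type) (d : X -> X -> R) : Prop :=
  (forall x y, 0 <= d x y <= 1) /\
  (forall x y, d x y = 0 <-> x = y) /\
  (forall x y, d x y = d y x) /\
  (forall x y z, d x z <= d x y + d y z).

Definition cauchy_seq {X : Type} (d : X -> X -> R) (u : nat -> X) : Prop :=
  forall eps, 0 < eps -> exists N, forall m n, (N <= m)%nat -> (N <= n)%nat ->
    d (u m) (u n) < eps.

Definition converges_to {X : Type} (d : X -> X -> R) (u : nat -> X) (l : X) : Prop :=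
  forall eps, 0 < eps -> exists N, forall n, (N <= n)%nat -> d (u n) l < eps.

Definition is_cmet1 (X : Type) (d : X -> X -> R) : Prop :=
  is_metric1 X d /\
  (forall u : nat -> X, cauchy_seq d u -> exists l, converges_to d u l).

Definition unif_cont {X Y : Type} (dX : X -> X -> R) (dY : Y -> Y -> R)
  (f : X -> Y) : Prop :=
  forall eps, 0 < eps -> exists delta, 0 < delta /\
    forall x x', dX x x' < delta -> dY (f x) (f x') < eps.

Definition functional_relation {X Y : Type} (RX : X -> X -> R) (SY : Y -> Y -> R)
  (F : X -> Y -> R) : Prop :=
  (forall x y, 0 <= F x y <= 1) /\
  sqsub (fun p : X * X * Y * Y =>
           let '(x, x', y, y') := p in Rmax (F x y) (Rmax (RX x x') (SY y y')))
        (fun p : X * X * Y * Y =>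
           let '(x, x', y, y') := p in F x' y') /\
  sqsub (fun p : X * Y * Y =>
           let '(x, y, y') := p in Rmax (F x y) (F x y'))
        (fun p : X * Y * Y =>
           let '(x, y, y') := p in SY y y') /\
  (* inf_y F(x,y) = 0 (given F >= 0): *)
  (forall x eps, 0 < eps -> exists y, F x y < eps).

(* Equivalence of functional relations: F ~ F' iff F ⊑ F' on X × Y. *)
Definition fr_equiv {X Y : Type} (F F' : X -> Y -> R) : Prop :=
  sqsub (fun p : X * Y => F (fst p) (snd p)) (fun p : X * Y => F' (fst p) (snd p)).

Definition G_map {X Y : Type} (dY : Y -> Y -> R) (f : X -> Y) : X -> Y -> R :=
  fun x y => dY (f x) y.

(* For each x the values
   F(x,-) get arbitrarily small ("inf_y F(x,y) = 0"), and any two points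
   y, y' with F(x,y), F(x,y') small are close in Y (second axiom).  Hence
   choosing y_n with F(x,y_n) < 1/(n+1) gives a Cauchy sequence, whose limit
   f(x) exists by completeness of Y; one checks F ⊑ G(f), i.e. [F] = G(f).

   Conversely, any map f with F ⊑ G(f) is automatically uniformly continuous
   (transport a witness y of F(x,-) ≈ 0 to x' with the first axiom), and two
   maps f, g with F ⊑ G(f), F ⊑ G(g) coincide (both f(x) and g(x) are close to
   a common witness y). *)

From Stdlib Require Import Reals Lra Lia ClassicalEpsilon FunctionalExtensionality.
Open Scope R_scope.

Lemma inv_succ_eventually_lt (delta : R) : 0 < delta ->
  exists N : nat, forall n, (N <= n)%nat -> / INR (S n) < delta.
Proof.
  intros Hdelta. destruct (archimed_cor1 delta Hdelta) as [N [HN HN0]].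
  exists N. intros n Hn. eapply Rle_lt_trans; [|exact HN].
  apply Rinv_le_contravar; [apply lt_0_INR; lia | apply le_INR; lia].
Qed.

Lemma inv_succ_pos (n : nat) : 0 < / INR (S n).
Proof. apply Rinv_0_lt_compat, lt_0_INR; lia. Qed.

Lemma metric_via (Y : Type) (d : Y -> Y -> R) (Hd : is_metric1 Y d) (a b c : Y) :
  d a c <= d a b + d c b.
Proof.
  destruct Hd as [_ [_ [Hsym Htri]]]. rewrite (Hsym c b). apply Htri.
Qed.

Section DominatedMaps.

Variables (X Y : Type) (dY : Y -> Y -> R) (F : X -> Y -> R).
Hypothesis HdY : is_metric1 Y dY.
Hypothesis F_total : forall x eps, 0 < eps -> exists y, F x y < eps.

Lemma common_witness (x : X) (a b : R) : 0 < a -> 0 < b ->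
  exists y, F x y <= a /\ F x y <= b.
Proof.
  intros Ha Hb. destruct (F_total x (Rmin a b) (Rmin_pos a b Ha Hb)) as [y Hy].
  exists y. pose proof (Rmin_l a b). pose proof (Rmin_r a b). split; lra.
Qed.

Lemma dominated_close (f : X -> Y) (eps : R) :
  fr_equiv F (G_map dY f) -> 0 < eps ->
  exists delta, 0 < delta /\ forall x y, F x y <= delta -> dY (f x) y <= eps.
Proof.
  intros Hf Heps. destruct (Hf eps Heps) as [delta [Hdelta Hclose]].
  exists delta. split; [exact Hdelta|]. intros x y Hxy. exact (Hclose (x, y) Hxy).
Qed.

Lemma dominated_unique (f g : X -> Y) :
  fr_equiv F (G_map dY f) -> fr_equiv F (G_map dY g) -> g = f.
Proof.
  intros Hf Hg. apply functional_extensionality. intros x.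
  destruct HdY as [Hbound [Hzero _]]. apply Hzero.
  destruct (proj1 (Hbound (g x) (f x))) as [He | He]; [exfalso | auto].
  assert (He3 : 0 < dY (g x) (f x) / 3) by lra.
  destruct (dominated_close g _ Hg He3) as [da [Hda Hga]].
  destruct (dominated_close f _ Hf He3) as [db [Hdb Hfb]].
  destruct (common_witness x da db Hda Hdb) as [y [Hya Hyb]].
  pose proof (metric_via Y dY HdY (g x) y (f x)).
  pose proof (Hga x y Hya). pose proof (Hfb x y Hyb). lra.
Qed.

Variable dX : X -> X -> R.
Hypothesis F_invariant :
  sqsub (fun p : X * X * Y * Y =>
           let '(x, x', y, y') := p in Rmax (F x y) (Rmax (dX x x') (dY y y')))
        (fun p : X * X * Y * Y =>
           let '(x, x', y, y') := p in F x' y').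

Lemma dominated_unif_cont (f : X -> Y) :
  fr_equiv F (G_map dY f) -> unif_cont dX dY f.
Proof.
  intros Hf eps Heps.
  destruct (dominated_close f (eps/3) Hf ltac:(lra)) as [da [Hda Hfa]].
  destruct (F_invariant da Hda) as [d1 [Hd1 Hmove]].
  exists d1. split; [exact Hd1|]. intros x x' Hxx'.
  destruct (common_witness x d1 da Hd1 Hda) as [y [Hy1 Hya]].
  assert (Hx'y : F x' y <= da).
  { apply (Hmove (x, x', y, y)). simpl.
    rewrite (proj2 (proj1 (proj2 HdY) y y) eq_refl).
    apply Rmax_lub; [exact Hy1|]. apply Rmax_lub; lra. }
  pose proof (metric_via Y dY HdY (f x) y (f x')).
  pose proof (Hfa x y Hya). pose proof (Hfa x' y Hx'y). lra.
Qed.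

End DominatedMaps.

Section Construction.

Variables (X Y : Type) (dY : Y -> Y -> R) (F : X -> Y -> R).
Hypothesis HdY : is_metric1 Y dY.
Hypothesis Y_complete : forall u : nat -> Y, cauchy_seq dY u -> exists l, converges_to dY u l.
Hypothesis F_total : forall x eps, 0 < eps -> exists y, F x y < eps.
Hypothesis F_single_valued :
  sqsub (fun p : X * Y * Y => let '(x, y, y') := p in Rmax (F x y) (F x y'))
        (fun p : X * Y * Y => let '(x, y, y') := p in dY y y').

Lemma single_valued_close (eps : R) : 0 < eps ->
  exists delta, 0 < delta /\
    forall x y y', F x y <= delta -> F x y' <= delta -> dY y y' <= eps.
Proof.
  intros Heps. destruct (F_single_valued eps Heps) as [delta [Hdelta Hclose]].
  exists delta. split; [exact Hdelta|]. intros x y y' H1 H2.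
  apply (Hclose (x, y, y')). simpl. apply Rmax_lub; assumption.
Qed.

Definition approx (x : X) (n : nat) : Y :=
  proj1_sig (constructive_indefinite_description _ (F_total x _ (inv_succ_pos n))).

Lemma approx_spec (x : X) (n : nat) : F x (approx x n) < / INR (S n).
Proof. unfold approx. destruct constructive_indefinite_description; assumption. Qed.

Lemma approx_eventually_small (x : X) (delta : R) : 0 < delta ->
  exists N, forall n, (N <= n)%nat -> F x (approx x n) <= delta.
Proof.
  intros Hdelta. destruct (inv_succ_eventually_lt delta Hdelta) as [N HN].
  exists N. intros n Hn. left. eapply Rlt_trans; [apply approx_spec | auto].
Qed.

Lemma approx_cauchy (x : X) : cauchy_seq dY (approx x).
Proof.
  intros eps Heps. destruct (single_valued_close (eps/2) ltac:(lra)) as [d [Hd Hclose]].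
  destruct (approx_eventually_small x d Hd) as [N HN].
  exists N. intros m n Hm Hn.
  pose proof (Hclose x _ _ (HN m Hm) (HN n Hn)). lra.
Qed.

Definition induced_map (x : X) : Y :=
  proj1_sig (constructive_indefinite_description _ (Y_complete _ (approx_cauchy x))).

Lemma induced_map_limit (x : X) : converges_to dY (approx x) (induced_map x).
Proof. unfold induced_map. destruct constructive_indefinite_description; assumption. Qed.

Lemma induced_map_dominated : fr_equiv F (G_map dY induced_map).
Proof.
  intros eps Heps. destruct (single_valued_close (eps/2) ltac:(lra)) as [d [Hd Hclose]].
  exists d. split; [exact Hd|]. intros [x y] Hxy. simpl in Hxy |- *. unfold G_map.
  destruct (induced_map_limit x (eps/2) ltac:(lra)) as [N1 HN1].
  destruct (approx_eventually_small x d Hd) as [N2 HN2].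
  set (n := Nat.max N1 N2).
  pose proof (HN1 n ltac:(lia)).
  pose proof (Hclose x _ _ (HN2 n ltac:(lia)) Hxy).
  pose proof (metric_via Y dY HdY (induced_map x) (approx x n) y).
  destruct HdY as [_ [_ [Hsym _]]]. rewrite Hsym in *. lra.
Qed.

End Construction.

Theorem mainTheorem9 (X Y : Type) (dX : X -> X -> R) (dY : Y -> Y -> R)
  (HX : is_cmet1 X dX) (HY : is_cmet1 Y dY) (F : X -> Y -> R)
  (HF : functional_relation dX dY F) :
  exists f : X -> Y, (unif_cont dX dY f /\ fr_equiv F (G_map dY f)) /\
    forall g : X -> Y, unif_cont dX dY g -> fr_equiv F (G_map dY g) -> g = f.
Proof.
  destruct HF as [_ [F_invariant [F_single_valued F_total]]].
  destruct HY as [HdY Y_complete].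
  pose proof (induced_map_dominated X Y dY F HdY Y_complete F_total F_single_valued)
    as Hdom.
  eexists. split; [split|].
  - exact (dominated_unif_cont X Y dY F HdY F_total dX F_invariant _ Hdom).
  - exact Hdom.
  - intros g _ Hg. exact (dominated_unique X Y dY F HdY F_total _ g Hdom Hg).
Qed.
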